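(* For any nonempty basic clopen sets $\mathcal U,\mathcal V\subseteq\mathcal G$ there is a permutation $\varphi$ of $\mathbb N$ with $\varphi(1)=1$ such that $h_\varphi(\mathcal U)\cap\mathcal V\neq\emptyset$.
   Context: Let $\mathbb N=\{1,2,3,\dots\}$. Equip $\mathbb N^{\mathbb N\times\mathbb N}$ with the product topology of the discrete topology on $\mathbb N$. Let $\mathcal G$ be the subspace consisting of those $A\in\mathbb N^{\mathbb N\times\mathbb N}$ that are the multiplication table of a group on the underlying set $\mathbb N$ whose identity element is $1$. Basic clopen sets are the sets of the form $\{G\in\mathcal G:\ G(n_i,m_i)=k_i\text{ for all }i\le l\}$ with $l,n_i,m_i,k_i\in\mathbb N$ (i.e. finitely many products $n_i\cdot m_i=k_i$ are prescribed). For a bijection $\varphi:\mathbb N\to\mathbb N$ fixing $1$, the induced homeomorphism $h_\varphi:\mathcal G\to\mathcal G$ is defined by $h_\varphi(G)(i,j)=\varphi(G(\varphi^{-1}(i),\varphi^{-1}(j)))$, so that $\varphi$ is an isomorphism from the group with table $G$ onto the group with table $h_\varphi(G)$. *)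

(* N = {1,2,3,...} is represented by the positive elements of nat;
   a point of N^(N x N) is a function nat -> nat -> nat, of which only the values
   at positive arguments matter. *)
From Stdlib Require Import Arith List.
Import ListNotations.

Definition is_group_table (G : nat -> nat -> nat) : Prop :=
  (forall n m, 0 < n -> 0 < m -> 0 < G n m) /\
  (forall a b c, 0 < a -> 0 < b -> 0 < c -> G (G a b) c = G a (G b c)) /\
  (forall n, 0 < n -> G 1 n = n /\ G n 1 = n) /\
  (forall n, 0 < n -> exists m, 0 < m /\ G n m = 1 /\ G m n = 1).

(* A basic clopen set is given by finitely many prescriptions (n_i, m_i, k_i),
   all in N, meaning n_i * m_i = k_i. *)
Definition valid_prescription (c : list (nat * nat * nat)) : Prop :=
  Forall (fun t => match t with (n, m, k) => 0 < n /\ 0 < m /\ 0 < k end) c.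

Definition in_basic_clopen (c : list (nat * nat * nat)) (G : nat -> nat -> nat) : Prop :=
  is_group_table G /\
  Forall (fun t => match t with (n, m, k) => G n m = k end) c.

Definition perm_N_fix1 (phi psi : nat -> nat) : Prop :=
  (forall n, 0 < n -> 0 < phi n) /\ (forall n, 0 < n -> 0 < psi n) /\
  (forall n, 0 < n -> phi (psi n) = n) /\ (forall n, 0 < n -> psi (phi n) = n) /\
  phi 1 = 1.

Definition h_phi (phi psi : nat -> nat) (G : nat -> nat -> nat) : nat -> nat -> nat :=
  fun i j => phi (G (psi i) (psi j)).

(* Take groups G1 in U and G2 in V and form G1 x G2 on N through a Cantor
   pairing.  Its subgroups G1 x 1 and 1 x G2 satisfy the prescriptions of U and
   V respectively once their labels are matched; a permutation of N fixing 1
   that sends the finitely many labels of U into G1 x 1 transports the product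
   into U, and another one does the same for V and 1 x G2.  Composing the
   first with the inverse of the second gives phi. *)
From Stdlib Require Import Arith List Lia Cantor.
Import ListNotations.

Definition perm_pos (p q : nat -> nat) : Prop :=
  (forall n, 0 < n -> 0 < p n) /\ (forall n, 0 < n -> 0 < q n) /\
  (forall n, 0 < n -> p (q n) = n) /\ (forall n, 0 < n -> q (p n) = n).

Lemma perm_pos_id : perm_pos (fun x => x) (fun x => x).
Proof. repeat split; auto. Qed.

Lemma perm_pos_comp p q p' q' :
  perm_pos p q -> perm_pos p' q' -> perm_pos (fun x => p (p' x)) (fun x => q' (q x)).
Proof.
  intros [P0 [Q0 [PQ QP]]] [P0' [Q0' [PQ' QP']]].
  repeat split; intros; auto.
  - rewrite PQ'; auto.
  - rewrite QP; auto.
Qed.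

Lemma perm_N_fix1_intro p q : perm_pos p q -> p 1 = 1 -> perm_N_fix1 p q.
Proof. intros [? [? [? ?]]] ?; repeat split; auto. Qed.

Lemma perm_N_fix1_perm_pos p q : perm_N_fix1 p q -> perm_pos p q.
Proof. intros [? [? [? [? _]]]]; repeat split; auto. Qed.

Lemma perm_N_fix1_sym p q : perm_N_fix1 p q -> perm_N_fix1 q p.
Proof.
  intros [P1 [Q1 [PQ [QP E]]]]; repeat split; auto.
  rewrite <- E at 1; apply QP; lia.
Qed.

Lemma perm_N_fix1_comp p q p' q' :
  perm_N_fix1 p q -> perm_N_fix1 p' q' ->
  perm_N_fix1 (fun x => p (p' x)) (fun x => q' (q x)).
Proof.
  intros Hp Hp'; apply perm_N_fix1_intro.
  - apply perm_pos_comp; apply perm_N_fix1_perm_pos; assumption.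
  - destruct Hp as [_ [_ [_ [_ E]]]], Hp' as [_ [_ [_ [_ E']]]].
    rewrite E', E; reflexivity.
Qed.

Definition swap (c d x : nat) : nat :=
  if Nat.eqb x c then d else if Nat.eqb x d then c else x.

Lemma swap_involutive c d x : swap c d (swap c d x) = x.
Proof.
  unfold swap.
  destruct (Nat.eqb_spec x c) as [->|Hc]; [|destruct (Nat.eqb_spec x d) as [->|Hd]].
  - rewrite Nat.eqb_refl; destruct (Nat.eqb_spec d c); lia.
  - rewrite Nat.eqb_refl; reflexivity.
  - apply Nat.eqb_neq in Hc, Hd; rewrite Hc, Hd; reflexivity.
Qed.

Lemma swap_pos c d x : 0 < c -> 0 < d -> 0 < x -> 0 < swap c d x.
Proof. unfold swap; destruct (Nat.eqb x c), (Nat.eqb x d); auto. Qed.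

Lemma swap_l c d : swap c d c = d.
Proof. unfold swap; rewrite Nat.eqb_refl; reflexivity. Qed.

Lemma swap_other c d x : x <> c -> x <> d -> swap c d x = x.
Proof. unfold swap; destruct (Nat.eqb_spec x c), (Nat.eqb_spec x d); lia. Qed.

Lemma perm_pos_swap c d : 0 < c -> 0 < d -> perm_pos (swap c d) (swap c d).
Proof.
  intros Hc Hd; repeat split; intros; auto using swap_pos, swap_involutive.
Qed.

Lemma perm_pos_extends_injection (f : nat -> nat) (l : list nat) :
  (forall x, In x l -> 0 < x) -> (forall x, In x l -> 0 < f x) ->
  (forall x y, In x l -> In y l -> f x = f y -> x = y) ->
  exists p q, perm_pos p q /\ forall x, In x l -> p x = f x.
Proof.
  induction l as [|a l IH]; intros Hl Hf Hinj.
  - exists (fun x => x), (fun x => x); split; [apply perm_pos_id | intros x []].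
  - destruct IH as [p [q [Hpq Ep]]].
    { intros; apply Hl, in_cons; assumption. }
    { intros; apply Hf, in_cons; assumption. }
    { intros; apply Hinj; auto using in_cons. }
    destruct (in_dec Nat.eq_dec a l) as [Ha|Ha].
    + exists p, q; split; [assumption|].
      intros x [<-|Hx]; auto.
    + assert (Ha0 : 0 < a) by (apply Hl; left; reflexivity).
      assert (Hfa : 0 < f a) by (apply Hf; left; reflexivity).
      pose proof Hpq as [P1 [_ [_ QP]]].
      exists (fun x => swap (p a) (f a) (p x)), (fun x => q (swap (p a) (f a) x)).
      split; [apply perm_pos_comp; auto using perm_pos_swap|].
      intros x [<-|Hx]; [apply swap_l|].
      rewrite (Ep x Hx); apply swap_other; intro E.
      * apply Ha; replace a with x; [assumption|].
        rewrite <- (QP x), <- (QP a), (Ep x Hx), E; auto using in_cons.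
      * apply Ha; replace a with x; [assumption|].
        apply Hinj; auto using in_eq, in_cons.
Qed.

Lemma perm_N_fix1_extends_injection (f : nat -> nat) (l : list nat) :
  In 1 l -> f 1 = 1 ->
  (forall x, In x l -> 0 < x) -> (forall x, In x l -> 0 < f x) ->
  (forall x y, In x l -> In y l -> f x = f y -> x = y) ->
  exists p q, perm_N_fix1 p q /\ forall x, In x l -> p x = f x.
Proof.
  intros H1 Hf1 Hl Hf Hinj.
  destruct (perm_pos_extends_injection f l Hl Hf Hinj) as [p [q [Hpq Ep]]].
  exists p, q; split; [apply perm_N_fix1_intro; [|rewrite Ep]|]; auto.
Qed.

Lemma h_phi_group_table p q H :
  perm_N_fix1 p q -> is_group_table H -> is_group_table (h_phi p q H).
Proof.
  intros Hpq [H0 [Hassoc [Hunit Hinv]]].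
  destruct (perm_N_fix1_sym _ _ Hpq) as [_ [_ [_ [_ Q1]]]].
  destruct Hpq as [P0 [Q0 [PQ [QP P1]]]].
  unfold h_phi; repeat split; intros.
  - apply P0, H0; auto.
  - rewrite !QP by (apply H0; auto); rewrite Hassoc; auto.
  - rewrite Q1, (proj1 (Hunit _ (Q0 n H1))); auto.
  - rewrite Q1, (proj2 (Hunit _ (Q0 n H1))); auto.
  - destruct (Hinv (q n) (Q0 n H1)) as [m [Hm [E1 E2]]].
    exists (p m); split; [auto|].
    rewrite QP, E1, E2 by assumption; auto.
Qed.

Lemma is_group_table_ext G G' :
  (forall i j, 0 < i -> 0 < j -> G i j = G' i j) ->
  is_group_table G -> is_group_table G'.
Proof.
  intros E [G0 [Gassoc [Gunit Ginv]]]; repeat split; intros.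
  - rewrite <- E by assumption; auto.
  - rewrite <- (E a b), <- (E b c), <- (E (G a b) c), <- (E a (G b c)) by auto.
    auto.
  - rewrite <- E by lia; apply Gunit; assumption.
  - rewrite <- E by lia; apply Gunit; assumption.
  - destruct (Ginv n H) as [m [Hm [E1 E2]]].
    exists m; rewrite <- !E by assumption; auto.
Qed.

Lemma in_basic_clopen_ext c G G' :
  valid_prescription c ->
  (forall i j, 0 < i -> 0 < j -> G i j = G' i j) ->
  in_basic_clopen c G -> in_basic_clopen c G'.
Proof.
  intros Hc E [HG HcG]; split; [apply is_group_table_ext with G; assumption|].
  unfold valid_prescription in Hc; rewrite Forall_forall in Hc, HcG |- *.
  intros [[n m] k] Ht; specialize (Hc _ Ht); specialize (HcG _ Ht).
  simpl in *; rewrite <- E by tauto; assumption.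
Qed.

Lemma in_basic_clopen_pullback c p q H :
  valid_prescription c -> perm_N_fix1 p q -> is_group_table H ->
  Forall (fun t => match t with (n, m, k) => H (p n) (p m) = p k end) c ->
  in_basic_clopen c (h_phi q p H).
Proof.
  intros Hvalid Hpq HH Hc; split.
  - apply h_phi_group_table; auto using perm_N_fix1_sym.
  - destruct Hpq as [_ [_ [_ [QP _]]]].
    unfold valid_prescription in Hvalid.
    rewrite Forall_forall in Hvalid, Hc |- *.
    intros [[n m] k] Ht; specialize (Hvalid _ Ht); specialize (Hc _ Ht).
    simpl in *; unfold h_phi; rewrite Hc; apply QP; tauto.
Qed.

Lemma h_phi_conj_cancel p q r r' H i j :
  perm_pos p q -> perm_pos r r' -> is_group_table H -> 0 < i -> 0 < j ->
  h_phi (fun x => q (r x)) (fun x => r' (p x)) (h_phi r' r H) i j = h_phi q p H i j.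
Proof.
  intros [P0 _] [_ [_ [RR' _]]] [H0 _] Hi Hj.
  unfold h_phi; rewrite (RR' (p i)), (RR' (p j)), RR' by auto; reflexivity.
Qed.

Definition pair_pos (a b : nat) : nat := S (to_nat (a - 1, b - 1)).
Definition fst_pos (n : nat) : nat := S (fst (of_nat (n - 1))).
Definition snd_pos (n : nat) : nat := S (snd (of_nat (n - 1))).

Lemma pair_pos_gt0 a b : 0 < pair_pos a b.
Proof. unfold pair_pos; lia. Qed.

Lemma fst_pos_gt0 n : 0 < fst_pos n.
Proof. unfold fst_pos; lia. Qed.

Lemma snd_pos_gt0 n : 0 < snd_pos n.
Proof. unfold snd_pos; lia. Qed.

Lemma fst_pair_pos a b : 0 < a -> fst_pos (pair_pos a b) = a.
Proof. intros; unfold fst_pos, pair_pos; rewrite Nat.sub_succ, Nat.sub_0_r, cancel_of_to; simpl; lia. Qed.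

Lemma snd_pair_pos a b : 0 < b -> snd_pos (pair_pos a b) = b.
Proof. intros; unfold snd_pos, pair_pos; rewrite Nat.sub_succ, Nat.sub_0_r, cancel_of_to; simpl; lia. Qed.

Lemma fst_pos_1 : fst_pos 1 = 1.
Proof. reflexivity. Qed.

Lemma snd_pos_1 : snd_pos 1 = 1.
Proof. reflexivity. Qed.

Lemma pair_pos_eta n : 0 < n -> pair_pos (fst_pos n) (snd_pos n) = n.
Proof.
  intros; unfold fst_pos, snd_pos, pair_pos; rewrite !Nat.sub_succ, !Nat.sub_0_r.
  rewrite <- surjective_pairing, cancel_to_of; lia.
Qed.

Definition prod_table (G1 G2 : nat -> nat -> nat) (a b : nat) : nat :=
  pair_pos (G1 (fst_pos a) (fst_pos b)) (G2 (snd_pos a) (snd_pos b)).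

Lemma prod_table_group G1 G2 :
  is_group_table G1 -> is_group_table G2 -> is_group_table (prod_table G1 G2).
Proof.
  intros [P1 [A1 [U1 V1]]] [P2 [A2 [U2 V2]]].
  pose proof fst_pos_gt0 as F0; pose proof snd_pos_gt0 as S0.
  unfold prod_table; repeat split; intros.
  - apply pair_pos_gt0.
  - rewrite !fst_pair_pos, !snd_pair_pos, A1, A2 by auto; reflexivity.
  - rewrite fst_pos_1, snd_pos_1, (proj1 (U1 _ (F0 n))), (proj1 (U2 _ (S0 n))); apply pair_pos_eta; auto.
  - rewrite fst_pos_1, snd_pos_1, (proj2 (U1 _ (F0 n))), (proj2 (U2 _ (S0 n))); apply pair_pos_eta; auto.
  - destruct (V1 _ (F0 n)) as [m1 [Hm1 [E1 F1]]].
    destruct (V2 _ (S0 n)) as [m2 [Hm2 [E2 F2]]].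
    exists (pair_pos m1 m2); split; [apply pair_pos_gt0|].
    rewrite !fst_pair_pos, !snd_pair_pos, E1, E2, F1, F2 by auto; auto.
Qed.

Lemma prod_table_left G1 G2 a b :
  is_group_table G2 -> 0 < a -> 0 < b ->
  prod_table G1 G2 (pair_pos a 1) (pair_pos b 1) = pair_pos (G1 a b) 1.
Proof.
  intros [_ [_ [U2 _]]] Ha Hb; unfold prod_table.
  rewrite !fst_pair_pos, !snd_pair_pos, (proj1 (U2 1 Nat.lt_0_1)) by lia.
  reflexivity.
Qed.

Lemma prod_table_right G1 G2 a b :
  is_group_table G1 -> 0 < a -> 0 < b ->
  prod_table G1 G2 (pair_pos 1 a) (pair_pos 1 b) = pair_pos 1 (G2 a b).
Proof.
  intros [_ [_ [U1 _]]] Ha Hb; unfold prod_table.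
  rewrite !fst_pair_pos, !snd_pair_pos, (proj1 (U1 1 Nat.lt_0_1)) by lia.
  reflexivity.
Qed.

Definition labels (c : list (nat * nat * nat)) : list nat :=
  1 :: flat_map (fun t => match t with (n, m, k) => [n; m; k] end) c.

Lemma labels_pos c x : valid_prescription c -> In x (labels c) -> 0 < x.
Proof.
  intros Hc [<-|Hx]; [lia|].
  apply in_flat_map in Hx as [[[n m] k] [Ht Hx]].
  unfold valid_prescription in Hc; rewrite Forall_forall in Hc.
  specialize (Hc _ Ht); simpl in *; intuition (subst; auto).
Qed.

Lemma in_labels c n m k :
  In (n, m, k) c -> In n (labels c) /\ In m (labels c) /\ In k (labels c).
Proof.
  intro Ht; unfold labels; repeat split; right; apply in_flat_map;
    exists (n, m, k); simpl; auto.
Qed.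

Lemma in_basic_clopen_relabel c H (f : nat -> nat) :
  valid_prescription c -> is_group_table H -> f 1 = 1 ->
  (forall x, 0 < x -> 0 < f x) ->
  (forall x y, 0 < x -> 0 < y -> f x = f y -> x = y) ->
  Forall (fun t => match t with (n, m, k) => H (f n) (f m) = f k end) c ->
  exists p q, perm_N_fix1 p q /\ in_basic_clopen c (h_phi q p H).
Proof.
  intros Hc HH Hf1 Hf0 Hinj Hf.
  pose proof (labels_pos c) as Hlab.
  destruct (perm_N_fix1_extends_injection f (labels c)) as [p [q [Hpq Ep]]].
  { left; reflexivity. }
  { assumption. }
  { intros; apply Hlab; assumption. }
  { intros; apply Hf0, Hlab; assumption. }
  { intros; apply Hinj; auto. }
  exists p, q; split; [assumption|].
  apply in_basic_clopen_pullback; auto.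
  rewrite Forall_forall in Hf |- *; intros [[n m] k] Ht.
  destruct (in_labels _ _ _ _ Ht) as [Hn [Hm Hk]].
  rewrite !Ep by assumption; apply (Hf _ Ht).
Qed.

Lemma pair_pos_1_1 : pair_pos 1 1 = 1.
Proof. reflexivity. Qed.

Lemma prod_table_in_left c G1 G2 :
  valid_prescription c -> in_basic_clopen c G1 -> is_group_table G2 ->
  exists p q, perm_N_fix1 p q /\ in_basic_clopen c (h_phi q p (prod_table G1 G2)).
Proof.
  intros Hc [HG1 HcG1] HG2.
  apply in_basic_clopen_relabel with (fun n => pair_pos n 1).
  - assumption.
  - apply prod_table_group; assumption.
  - apply pair_pos_1_1.
  - intros; apply pair_pos_gt0.
  - intros x y Hx Hy E; rewrite <- (fst_pair_pos x 1), E by assumption; apply fst_pair_pos; assumption.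
  - unfold valid_prescription in Hc; rewrite Forall_forall in Hc, HcG1 |- *.
    intros [[n m] k] Ht; specialize (Hc _ Ht); specialize (HcG1 _ Ht); simpl in *.
    rewrite prod_table_left, HcG1 by tauto; reflexivity.
Qed.

Lemma prod_table_in_right c G1 G2 :
  valid_prescription c -> is_group_table G1 -> in_basic_clopen c G2 ->
  exists p q, perm_N_fix1 p q /\ in_basic_clopen c (h_phi q p (prod_table G1 G2)).
Proof.
  intros Hc HG1 [HG2 HcG2].
  apply in_basic_clopen_relabel with (fun n => pair_pos 1 n).
  - assumption.
  - apply prod_table_group; assumption.
  - apply pair_pos_1_1.
  - intros; apply pair_pos_gt0.
  - intros x y Hx Hy E; rewrite <- (snd_pair_pos 1 x), E by assumption; apply snd_pair_pos; assumption.
  - unfold valid_prescription in Hc; rewrite Forall_forall in Hc, HcG2 |- *.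
    intros [[n m] k] Ht; specialize (Hc _ Ht); specialize (HcG2 _ Ht); simpl in *.
    rewrite prod_table_right, HcG2 by tauto; reflexivity.
Qed.

Theorem lemma5p2 (cU cV : list (nat * nat * nat)) :
  valid_prescription cU -> valid_prescription cV ->
  (exists G, in_basic_clopen cU G) ->
  (exists G, in_basic_clopen cV G) ->
  exists phi psi : nat -> nat,
    perm_N_fix1 phi psi /\
    exists G, in_basic_clopen cU G /\ in_basic_clopen cV (h_phi phi psi G).
Proof.
  intros HcU HcV [G1 HG1] [G2 HG2].
  destruct (prod_table_in_left cU G1 G2 HcU HG1 (proj1 HG2)) as [p [q [Hpq HU]]].
  destruct (prod_table_in_right cV G1 G2 HcV (proj1 HG1) HG2) as [p' [q' [Hpq' HV]]].
  set (H := prod_table G1 G2) in HU, HV.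
  exists (fun x => q' (p x)), (fun x => q (p' x)); split.
  - apply perm_N_fix1_comp; [apply perm_N_fix1_sym|]; assumption.
  - exists (h_phi q p H); split; [assumption|].
    apply in_basic_clopen_ext with (h_phi q' p' H); [assumption | | assumption].
    intros i j Hi Hj; symmetry; apply h_phi_conj_cancel; auto using perm_N_fix1_perm_pos.
    apply prod_table_group; [apply HG1 | apply HG2].
Qed.
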